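(* Define functions $v_n,\widetilde v_n:[0,1]\to\mathbb{R}$ for $n\ge 0$ by $v_0\equiv\widetilde v_0\equiv 0$ and, for $n\ge1$ and $0\le x\le 1$, $$ v_n(x)=(1-x)\,v_{n-1}(x)+\int_0^x \max\{v_{n-1}(x),\,1+v_{n-1}(x-y)\}\,dy, $$ $$ \widetilde v_n(x)=(1-x)\,\widetilde v_{n-1}(x)+\int_0^x \max\{\widetilde v_{n-1}(x),\,1+\widetilde v_{n-1}(y)\}\,dy. $$ Then $v_n(x)=\widetilde v_n(x)$ for all $n\ge 0$ and all $0\le x\le 1$.
   Context: These are the Bellman equations, for observations uniformly distributed on $[0,1]$, of the sequential knapsack problem (maximize the expected number of items selected with total size at most the capacity $x$) and of the sequential monotone decreasing subsequence selection problem (state $x$ = last selected value), respectively, with $n$ observations remaining. *)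

From Stdlib Require Import Reals ClassicalEpsilon.
Open Scope R_scope.

(* Total Riemann integral: RiemannInt when f is Riemann integrable on [a,b]
   (value independent of the integrability proof, RiemannInt_P5), else 0. *)
Definition RInt (f : R -> R) (a b : R) : R :=
  match excluded_middle_informative (inhabited (Riemann_integrable f a b)) with
  | left H => RiemannInt (epsilon H (fun _ => True))
  | right _ => 0
  end.

Fixpoint v (n : nat) (x : R) : R :=
  match n with
  | O => 0
  | S m => (1 - x) * v m x + RInt (fun y => Rmax (v m x) (1 + v m (x - y))) 0 x
  end.

Fixpoint vt (n : nat) (x : R) : R :=
  match n with
  | O => 0
  | S m => (1 - x) * vt m x + RInt (fun y => Rmax (vt m x) (1 + vt m y)) 0 x
  end.

(* The reflection [y |-> x - y] maps [0, x] onto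
   itself and preserves the Riemann integral, so by induction on [n] (using
   [v n = vt n] on the whole of [0, x]) the two integrals coincide. *)

From Pilot Require Import Defs.
From Stdlib Require Import Reals Lra ClassicalEpsilon.
From Coquelicot Require Import Coquelicot.
Open Scope R_scope.

Lemma Defs_RInt_integrable (f : R -> R) (a b : R) :
  ex_RInt f a b -> Defs.RInt f a b = RInt f a b.
Proof.
  intro If; unfold Defs.RInt.
  destruct excluded_middle_informative as [Hex | Nf].
  - rewrite (RInt_Reals f a b (ex_RInt_Reals_0 f a b If)).
    apply RiemannInt_P5.
  - exfalso; apply Nf; constructor; exact (ex_RInt_Reals_0 f a b If).
Qed.

Lemma Defs_RInt_not_integrable (f : R -> R) (a b : R) :
  ~ ex_RInt f a b -> Defs.RInt f a b = 0.
Proof.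
  intro Nf; unfold Defs.RInt.
  destruct excluded_middle_informative as [[pr] | _]; [|reflexivity].
  exfalso; apply Nf; exact (ex_RInt_Reals_1 f a b pr).
Qed.

Lemma Defs_RInt_ext (f g : R -> R) (a b : R) :
  (forall y, Rmin a b < y < Rmax a b -> f y = g y) ->
  Defs.RInt f a b = Defs.RInt g a b.
Proof.
  intro Efg.
  assert (Egf : forall y, Rmin a b < y < Rmax a b -> g y = f y)
    by (intros; symmetry; auto).
  destruct (classic (ex_RInt f a b)) as [If | Nf].
  - rewrite !Defs_RInt_integrable; [apply RInt_ext | apply (ex_RInt_ext f) |]; auto.
  - rewrite !Defs_RInt_not_integrable; auto.
    intro Ig; apply Nf; exact (ex_RInt_ext g f a b Egf Ig).
Qed.

Lemma reflect_eq_opp_scal_comp_lin (h : R -> R) (a b y : R) :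
  h (a + b - y) = opp (scal (-1) (h (-1 * y + (a + b)))).
Proof.
  unfold opp, scal; simpl; unfold mult; simpl.
  replace (-1 * y + (a + b)) with (a + b - y) by ring; ring.
Qed.

Lemma ex_RInt_reflect (h : R -> R) (a b : R) :
  ex_RInt h a b -> ex_RInt (fun y => h (a + b - y)) a b.
Proof.
  intro Ih.
  pose proof (ex_RInt_comp_lin h (-1) (a + b) a b) as Ilin.
  replace (-1 * a + (a + b)) with b in Ilin by ring.
  replace (-1 * b + (a + b)) with a in Ilin by ring.
  apply (ex_RInt_ext (fun y => opp (scal (-1) (h (-1 * y + (a + b)))))).
  - intros y _; symmetry; apply reflect_eq_opp_scal_comp_lin.
  - apply (ex_RInt_opp (V := R_NormedModule)), Ilin, ex_RInt_swap, Ih.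
Qed.

Lemma ex_RInt_reflect_iff (h : R -> R) (a b : R) :
  ex_RInt (fun y => h (a + b - y)) a b <-> ex_RInt h a b.
Proof.
  split; [|apply ex_RInt_reflect].
  intro Ir; apply ex_RInt_reflect in Ir.
  apply (ex_RInt_ext (fun y => h (a + b - (a + b - y))) h a b); [|exact Ir].
  intros y _; simpl; f_equal; ring.
Qed.

Lemma RInt_reflect (h : R -> R) (a b : R) :
  ex_RInt h a b -> RInt (fun y => h (a + b - y)) a b = RInt h a b.
Proof.
  intro Ih.
  pose proof (ex_RInt_comp_lin h (-1) (a + b) a b) as Ilin.
  pose proof (RInt_comp_lin h (-1) (a + b) a b) as Elin.
  replace (-1 * a + (a + b)) with b in Ilin, Elin by ring.
  replace (-1 * b + (a + b)) with a in Ilin, Elin by ring.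
  rewrite (RInt_ext _ (fun y => opp (scal (-1) (h (-1 * y + (a + b)))))).
  - rewrite (RInt_opp (V := R_CompleteNormedModule)) by (apply Ilin, ex_RInt_swap, Ih).
    transitivity (opp (RInt h b a)); [apply f_equal, Elin, ex_RInt_swap, Ih|].
    apply (opp_RInt_swap (V := R_CompleteNormedModule)), ex_RInt_swap, Ih.
  - intros y _; apply reflect_eq_opp_scal_comp_lin.
Qed.

Lemma Defs_RInt_reflect (h : R -> R) (a b : R) :
  Defs.RInt (fun y => h (a + b - y)) a b = Defs.RInt h a b.
Proof.
  destruct (classic (ex_RInt h a b)) as [Ih | Nh].
  - rewrite (Defs_RInt_integrable _ a b (ex_RInt_reflect h a b Ih)).
    rewrite (Defs_RInt_integrable h a b Ih).
    exact (RInt_reflect h a b Ih).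
  - rewrite (Defs_RInt_not_integrable h a b Nh).
    apply Defs_RInt_not_integrable; rewrite ex_RInt_reflect_iff; exact Nh.
Qed.

Theorem proposition1 : forall (n : nat) (x : R), 0 <= x <= 1 -> v n x = vt n x.
Proof.
  induction n as [|m IH]; intros x Hx; simpl; [reflexivity|].
  rewrite IH by exact Hx; f_equal.
  rewrite <- (Defs_RInt_reflect (fun z => Rmax (vt m x) (1 + vt m z)) 0 x).
  apply Defs_RInt_ext; intros y Hy.
  rewrite Rmin_left, Rmax_right in Hy by lra.
  rewrite Rplus_0_l, IH by lra; reflexivity.
Qed.
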